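(* Let $\Gamma\subset\{d_L<+\infty\}$ be a $\sigma$-compact $d_L$-cyclically monotone subset of $X\times X$, and let $\Gamma'$, $G$, $R$ be defined from $\Gamma$ as in the context. Then: (1) $G$ is $d_L$-cyclically monotone; (2) $\Gamma'\subset G\subset\{(x,y):d_L(x,y)<+\infty\}$; (3) $G$ and $R$ are analytic subsets of $X\times X$.
   Context: $(X,d)$ is a Polish space and $d_L:X\times X\to[0,+\infty]$ is a distance (possibly taking the value $+\infty$) which is Borel on $(X\times X,d\times d)$. A set $\Gamma\subset X\times X$ is $d_L$-cyclically monotone if for all $(x_0,y_0),\dots,(x_n,y_n)\in\Gamma$, $\sum_{i=0}^n d_L(x_i,y_i)\le\sum_{i=0}^n d_L(x_{i+1},y_i)$ with $x_{n+1}=x_0$. $\Gamma'$ is the set of $(x,y)$ such that there exist $I\ge0$ and $(w_i,z_i)\in\Gamma$, $i=0,\dots,I$, with $w_0=x$, $z_I=y$, $w_{I+1}:=w_0$ and $\sum_{i=0}^I(d_L(w_{i+1},z_i)-d_L(w_i,z_i))=0$. The set of oriented transport rays is $G:=\{(x,y):\exists(w,z)\in\Gamma',\ d_L(w,x)+d_L(x,y)+d_L(y,z)=d_L(w,z)\}$, $G^{-1}:=\{(x,y):(y,x)\in G\}$, and $R:=G\cup G^{-1}$. Analytic sets are projections of Borel sets of products of Polish spaces. *)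

From Stdlib Require Import Reals Lra.
Open Scope R_scope.

Inductive ER : Type := Fin (r : R) | PInf.

Definition eadd (a b : ER) : ER :=
  match a, b with
  | Fin x, Fin y => Fin (x + y)
  | _, _ => PInf
  end.

Definition ele (a b : ER) : Prop :=
  match a, b with
  | Fin x, Fin y => x <= y
  | _, PInf => True
  | PInf, Fin _ => False
  end.

Fixpoint esum (n : nat) (g : nat -> ER) : ER :=
  match n with
  | O => g O
  | S m => eadd (esum m g) (g (S m))
  end.

Definition is_metric {X : Type} (d : X -> X -> R) : Prop :=
  (forall x y, 0 <= d x y) /\
  (forall x y, d x y = 0 <-> x = y) /\
  (forall x y, d x y = d y x) /\
  (forall x y z, d x z <= d x y + d y z).

Definition cauchy {X : Type} (d : X -> X -> R) (u : nat -> X) : Prop :=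
  forall eps, 0 < eps -> exists N, forall n m, (N <= n)%nat -> (N <= m)%nat ->
    d (u n) (u m) < eps.

Definition converges_to {X : Type} (d : X -> X -> R) (u : nat -> X) (l : X) : Prop :=
  forall eps, 0 < eps -> exists N, forall n, (N <= n)%nat -> d (u n) l < eps.

Definition complete {X : Type} (d : X -> X -> R) : Prop :=
  forall u, cauchy d u -> exists l, converges_to d u l.

(** countable dense subset (enumerated by nat, with [None] allowing X empty) *)
Definition separable {X : Type} (d : X -> X -> R) : Prop :=
  exists e : nat -> option X, forall x eps, 0 < eps ->
    exists n y, e n = Some y /\ d x y < eps.

Definition polish {X : Type} (d : X -> X -> R) : Prop :=
  is_metric d /\ complete d /\ separable d.

Definition prod_metric {X Y : Type} (dX : X -> X -> R) (dY : Y -> Y -> R)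
  (p q : X * Y) : R := Rmax (dX (fst p) (fst q)) (dY (snd p) (snd q)).

Definition is_open {X : Type} (d : X -> X -> R) (U : X -> Prop) : Prop :=
  forall x, U x -> exists eps, 0 < eps /\ forall y, d x y < eps -> U y.

Definition compact {X : Type} (d : X -> X -> R) (K : X -> Prop) : Prop :=
  forall (I : Type) (U : I -> X -> Prop),
    (forall i, is_open d (U i)) ->
    (forall x, K x -> exists i, U i x) ->
    exists l : list I, forall x, K x -> exists i, List.In i l /\ U i x.

Definition sigma_compact {X : Type} (d : X -> X -> R) (A : X -> Prop) : Prop :=
  exists K : nat -> X -> Prop,
    (forall n, compact d (K n)) /\ (forall x, A x <-> exists n, K n x).

Definition sigma_algebra {X : Type} (S : (X -> Prop) -> Prop) : Prop :=
  S (fun _ => False) /\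
  (forall A, S A -> S (fun x => ~ A x)) /\
  (forall A : nat -> X -> Prop, (forall n, S (A n)) -> S (fun x => exists n, A n x)).

Definition borel {X : Type} (d : X -> X -> R) (A : X -> Prop) : Prop :=
  forall S : (X -> Prop) -> Prop, sigma_algebra S ->
    (forall U, is_open d U -> S U) -> S A.

Definition borel_fun {X : Type} (d : X -> X -> R) (f : X -> ER) : Prop :=
  forall r : R, borel d (fun x => ele (f x) (Fin r)).

Definition analytic {Y : Type} (dY : Y -> Y -> R) (A : Y -> Prop) : Prop :=
  exists (Z : Type) (dZ : Z -> Z -> R), polish dZ /\
    exists B : Y * Z -> Prop, borel (prod_metric dY dZ) B /\
      forall y, A y <-> exists z, B (y, z).

Definition ext_distance {X : Type} (dL : X -> X -> ER) : Prop :=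
  (forall x y r, dL x y = Fin r -> 0 <= r) /\
  (forall x y, dL x y = Fin 0 <-> x = y) /\
  (forall x y, dL x y = dL y x) /\
  (forall x y z, ele (dL x z) (eadd (dL x y) (dL y z))).

Definition cnext (n i : nat) : nat := if Nat.eqb i n then O else S i.

Definition cyc_mono {X : Type} (dL : X -> X -> ER) (Gam : X * X -> Prop) : Prop :=
  forall (n : nat) (x y : nat -> X),
    (forall i, (i <= n)%nat -> Gam (x i, y i)) ->
    ele (esum n (fun i => dL (x i) (y i)))
        (esum n (fun i => dL (x (cnext n i)) (y i))).

Definition Gamma' {X : Type} (dL : X -> X -> ER) (Gam : X * X -> Prop)
  (p : X * X) : Prop :=
  exists (I : nat) (w z : nat -> X),
    (forall i, (i <= I)%nat -> Gam (w i, z i)) /\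
    w O = fst p /\ z I = snd p /\
    esum I (fun i => dL (w (cnext I i)) (z i)) = esum I (fun i => dL (w i) (z i)).

Definition Grays {X : Type} (dL : X -> X -> ER) (Gam : X * X -> Prop)
  (p : X * X) : Prop :=
  exists w z, Gamma' dL Gam (w, z) /\
    eadd (eadd (dL w (fst p)) (dL (fst p) (snd p))) (dL (snd p) z) = dL w z.

Definition Ginv {X : Type} (dL : X -> X -> ER) (Gam : X * X -> Prop)
  (p : X * X) : Prop := Grays dL Gam (snd p, fst p).

Definition Rrays {X : Type} (dL : X -> X -> ER) (Gam : X * X -> Prop)
  (p : X * X) : Prop := Grays dL Gam p \/ Ginv dL Gam p.

(* A pair
   of Gamma' comes with a chain in Gamma whose shifted cost equals its cost, so
   concatenating the chains of a cycle in Gamma' gives a cycle in Gamma, and the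
   inequality for Gamma turns into the one for Gamma'.  A pair (x, y) of G lies on
   the ray of some (w, z) in Gamma', with c(w, z) = c(w, x) + c(x, y) + c(y, z);
   bounding each shifted term c(w', z) of a cycle of such rays by
   c(w', x') + c(x', y) + c(y, z) transfers the inequality from Gamma' to G.
   The same chains show that Gamma' and hence G have finite costs.

   For analyticity, G is the projection of the set of pairs (x, y) together with a
   code: the chain of a pair of Gamma' and the real values of all the costs
   involved.  Each constraint on a code is a continuous preimage of Gamma (Borel,
   being sigma-compact) or of the graph of d_L (Borel, since d_L is), and codes
   range over a Polish space of finite lists of points and reals.  R is the union
   of G with its preimage under the swap (x, y) |-> (y, x). *)

From Pilot Require Import Defs.
From Stdlib Require Import Reals Lra Lia List Classical FunctionalExtensionality PropExtensionality Cantor.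
Import ListNotations.
Open Scope R_scope.

(** * Borel sets and continuous maps *)

Lemma pred_ext {A : Type} (P Q : A -> Prop) : (forall x, P x <-> Q x) -> P = Q.
Proof.
  intros H. apply functional_extensionality; intros x.
  apply propositional_extensionality; auto.
Qed.

Section BorelSets.
Context {A : Type} (dA : A -> A -> R).

Lemma borel_open U : is_open dA U -> borel dA U.
Proof. intros HU S _ Hopen; auto. Qed.

Lemma borel_compl U : borel dA U -> borel dA (fun x => ~ U x).
Proof. intros HU S HS Hopen. apply (proj1 (proj2 HS)), HU; auto. Qed.

Lemma borel_countable_union (U : nat -> A -> Prop) :
  (forall n, borel dA (U n)) -> borel dA (fun x => exists n, U n x).
Proof. intros HU S HS Hopen. apply (proj2 (proj2 HS)). intros n; apply HU; auto. Qed.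

Lemma borel_ext U V : (forall x, U x <-> V x) -> borel dA U -> borel dA V.
Proof. intros H. rewrite (pred_ext U V H). auto. Qed.

Lemma borel_empty : borel dA (fun _ => False).
Proof. intros S HS _. apply HS. Qed.

Lemma borel_full : borel dA (fun _ => True).
Proof. apply (borel_ext (fun _ => ~ False)); [tauto|]. apply borel_compl, borel_empty. Qed.

Lemma borel_countable_inter (U : nat -> A -> Prop) :
  (forall n, borel dA (U n)) -> borel dA (fun x => forall n, U n x).
Proof.
  intros HU. apply (borel_ext (fun x => ~ exists n, ~ U n x)).
  - intros x. split; [|firstorder]. intros H n. apply NNPP. eauto.
  - apply borel_compl, borel_countable_union. intros n. apply borel_compl, HU.
Qed.

Lemma borel_union U V : borel dA U -> borel dA V -> borel dA (fun x => U x \/ V x).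
Proof.
  intros HU HV.
  apply (borel_ext (fun x => exists n, (match n with O => U | S _ => V end) x)).
  - intros x. split; [intros [[|n] Hn]; auto|intros [H|H]; [exists O|exists (S O)]; auto].
  - apply borel_countable_union. intros [|n]; auto.
Qed.

Lemma borel_inter U V : borel dA U -> borel dA V -> borel dA (fun x => U x /\ V x).
Proof.
  intros HU HV. apply (borel_ext (fun x => ~ (~ U x \/ ~ V x))); [intros x; tauto|].
  apply borel_compl, borel_union; apply borel_compl; auto.
Qed.

Lemma borel_imply (Q : Prop) U : (Q -> borel dA U) -> borel dA (fun x => Q -> U x).
Proof.
  intros H. destruct (classic Q) as [q|nq].
  - apply (borel_ext U); [intros x; tauto|auto].
  - apply (borel_ext (fun _ => True)); [intros x; tauto|apply borel_full].
Qed.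

Lemma borel_closed C : is_open dA (fun x => ~ C x) -> borel dA C.
Proof.
  intros H. apply (borel_ext (fun x => ~ ~ C x)); [intros x; tauto|].
  apply borel_compl, borel_open, H.
Qed.

End BorelSets.

Definition continuous_map {A B : Type} (dA : A -> A -> R) (dB : B -> B -> R) (f : A -> B) :=
  forall a eps, 0 < eps -> exists del, 0 < del /\ forall a', dA a a' < del -> dB (f a) (f a') < eps.

Lemma borel_preimage {A B : Type} (dA : A -> A -> R) (dB : B -> B -> R) (f : A -> B) U :
  continuous_map dA dB f -> borel dB U -> borel dA (fun a => U (f a)).
Proof.
  intros Hf HU. apply (HU (fun V => borel dA (fun a => V (f a)))).
  - split; [apply borel_empty|split].
    + intros V HV. apply (borel_compl _ _ HV).
    + intros V HV. apply (borel_countable_union _ _ HV).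
  - intros V HV. apply borel_open. intros a Ha.
    destruct (HV (f a) Ha) as [eps [Heps HVball]].
    destruct (Hf a eps Heps) as [del [Hdel Hcont]]. exists del; split; auto.
Qed.

Section Continuity.
Context {A : Type} (dA : A -> A -> R).

Lemma continuous_comp {B C : Type} dB dC (f : A -> B) (g : B -> C) :
  continuous_map dA dB f -> continuous_map dB dC g -> continuous_map dA dC (fun a => g (f a)).
Proof.
  intros Hf Hg a eps Heps. destruct (Hg (f a) eps Heps) as [d1 [H1 Hg']].
  destruct (Hf a d1 H1) as [d2 [H2 Hf']]. exists d2; split; auto.
Qed.

Lemma continuous_const {B : Type} (dB : B -> B -> R) (b : B) :
  dB b b = 0 -> continuous_map dA dB (fun _ => b).
Proof. intros H a eps Heps. exists 1; split; [lra|]. intros; rewrite H; auto. Qed.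

Lemma continuous_fst {B : Type} (dB : B -> B -> R) : continuous_map (prod_metric dA dB) dA fst.
Proof.
  intros a eps Heps. exists eps; split; auto. intros a' H.
  eapply Rle_lt_trans; [apply Rmax_l|exact H].
Qed.

Lemma continuous_snd {B : Type} (dB : B -> B -> R) : continuous_map (prod_metric dB dA) dA snd.
Proof.
  intros a eps Heps. exists eps; split; auto. intros a' H.
  eapply Rle_lt_trans; [apply Rmax_r|exact H].
Qed.

Lemma continuous_pair {B C : Type} (dB : B -> B -> R) (dC : C -> C -> R) f g :
  continuous_map dA dB f -> continuous_map dA dC g ->
  continuous_map dA (prod_metric dB dC) (fun a => (f a, g a)).
Proof.
  intros Hf Hg a eps Heps.
  destruct (Hf a eps Heps) as [d1 [H1 Hf']]. destruct (Hg a eps Heps) as [d2 [H2 Hg']].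
  exists (Rmin d1 d2). split; [apply Rmin_glb_lt; auto|]. intros a' Ha'.
  apply Rmax_lub_lt; [apply Hf'|apply Hg'];
    eapply Rlt_le_trans; eauto; [apply Rmin_l|apply Rmin_r].
Qed.

Lemma continuous_plus F G :
  continuous_map dA Rdist F -> continuous_map dA Rdist G ->
  continuous_map dA Rdist (fun a => F a + G a).
Proof.
  intros HF HG a eps Heps.
  destruct (HF a (eps/2) ltac:(lra)) as [d1 [H1 HF']].
  destruct (HG a (eps/2) ltac:(lra)) as [d2 [H2 HG']].
  exists (Rmin d1 d2). split; [apply Rmin_glb_lt; auto|]. intros a' Ha'.
  eapply Rle_lt_trans; [apply Rdist_plus|].
  assert (Rdist (F a) (F a') < eps/2) by (apply HF'; eapply Rlt_le_trans; eauto; apply Rmin_l).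
  assert (Rdist (G a) (G a') < eps/2) by (apply HG'; eapply Rlt_le_trans; eauto; apply Rmin_r).
  lra.
Qed.

Lemma continuous_opp F : continuous_map dA Rdist F -> continuous_map dA Rdist (fun a => - F a).
Proof.
  intros HF a eps Heps. destruct (HF a eps Heps) as [del [Hdel HF']]. exists del; split; auto.
  intros a' Ha'. unfold Rdist. replace (- F a - - F a') with (- (F a - F a')) by ring.
  rewrite Rabs_Ropp. apply HF', Ha'.
Qed.

Lemma continuous_sum (F : nat -> A -> R) n :
  (forall i, continuous_map dA Rdist (F i)) ->
  continuous_map dA Rdist (fun a => sum_f_R0 (fun i => F i a) n).
Proof. intros H. induction n; simpl; auto. apply continuous_plus; auto. Qed.

Lemma borel_eq_continuous F G :
  continuous_map dA Rdist F -> continuous_map dA Rdist G -> borel dA (fun a => F a = G a).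
Proof.
  intros HF HG. apply borel_closed. intros a Hneq.
  assert (Hpos : 0 < Rabs (F a - G a)) by (apply Rabs_pos_lt; intro; apply Hneq; lra).
  destruct (continuous_plus _ _ HF (continuous_opp G HG) a _ Hpos) as [del [Hdel Hball]].
  exists del; split; auto. intros a' Ha' Heq. specialize (Hball a' Ha').
  unfold Rdist in Hball. rewrite Heq in Hball.
  replace (F a + - G a - (G a' + - G a')) with (F a - G a) in Hball by ring. lra.
Qed.

Lemma borel_le_continuous F G :
  continuous_map dA Rdist F -> continuous_map dA Rdist G -> borel dA (fun a => F a <= G a).
Proof.
  intros HF HG. apply borel_closed. intros a Hnle. apply Rnot_le_lt in Hnle.
  destruct (continuous_plus _ _ HF (continuous_opp G HG) a (F a - G a) ltac:(lra))
    as [del [Hdel Hball]].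
  exists del; split; auto. intros a' Ha' Hle. specialize (Hball a' Ha').
  unfold Rdist in Hball. apply Rabs_def2 in Hball. lra.
Qed.

End Continuity.

(** * Polish spaces *)

Lemma inv_succ_lt eps : 0 < eps -> exists n : nat, / INR (S n) < eps.
Proof.
  intros Heps. destruct (archimed_cor1 eps Heps) as [N [HN HN0]]. exists (pred N).
  replace (S (pred N)) with N by lia. exact HN.
Qed.

Definition qval (n a1 a2 : nat) : R := IZR (Z.of_nat a1 - Z.of_nat a2) / INR (S n).

Lemma qval_dense r s : r < s -> exists n a1 a2, r < qval n a1 a2 < s.
Proof.
  intros Hrs. destruct (inv_succ_lt (s - r) ltac:(lra)) as [n Hn].
  set (N := INR (S n)) in Hn. assert (HN : 0 < N) by (apply lt_0_INR; lia).
  set (k := up (r * N)). destruct (archimed (r * N)) as [Hk1 Hk2]. fold k in Hk1, Hk2.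
  exists n, (Z.to_nat k), (Z.to_nat (- k)). unfold qval. fold N.
  replace (Z.of_nat (Z.to_nat k) - Z.of_nat (Z.to_nat (- k)))%Z with k by lia.
  assert (HiN : 0 < / N) by (apply Rinv_0_lt_compat; lra).
  replace (IZR k / N) with (r + (IZR k - r * N) * / N) by (field; lra). split.
  - assert (0 < (IZR k - r * N) * / N) by (apply Rmult_lt_0_compat; lra). lra.
  - assert ((IZR k - r * N) * / N <= 1 * / N) by (apply Rmult_le_compat_r; lra). lra.
Qed.

Lemma metric_Rdist : is_metric Rdist.
Proof.
  split; [|split; [|split]].
  - intros x y. apply Rge_le, Rdist_pos.
  - apply Rdist_refl.
  - apply Rdist_sym.
  - intros x y z. apply Rdist_tri.
Qed.

Lemma polish_Rdist : polish Rdist.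
Proof.
  split; [apply metric_Rdist|split].
  - intros u Hu. destruct (R_complete u Hu) as [l Hl]. exists l. exact Hl.
  - exists (fun k => let '(n, m) := Cantor.of_nat k in
                     let '(a1, a2) := Cantor.of_nat m in Some (qval n a1 a2)).
    intros x eps Heps. destruct (qval_dense (x - eps) x ltac:(lra)) as (n & a1 & a2 & Hq).
    exists (Cantor.to_nat (n, Cantor.to_nat (a1, a2))), (qval n a1 a2).
    rewrite !Cantor.cancel_of_to. split; [reflexivity|].
    unfold Rdist. rewrite Rabs_right; lra.
Qed.

Lemma metric_prod {A B : Type} (dA : A -> A -> R) (dB : B -> B -> R) :
  is_metric dA -> is_metric dB -> is_metric (prod_metric dA dB).
Proof.
  intros (A1 & A2 & A3 & A4) (B1 & B2 & B3 & B4). unfold prod_metric.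
  split; [|split; [|split]].
  - intros x y. eapply Rle_trans; [apply A1|apply Rmax_l].
  - intros [a b] [a' b']; simpl. split.
    + intros H.
      assert (dA a a' <= 0) by (rewrite <- H; apply Rmax_l).
      assert (dB b b' <= 0) by (rewrite <- H; apply Rmax_r).
      pose proof (A1 a a'). pose proof (B1 b b').
      f_equal; [apply A2|apply B2]; lra.
    + intros [= -> ->]. rewrite (proj2 (A2 a' a') eq_refl), (proj2 (B2 b' b') eq_refl).
      apply Rmax_left. lra.
  - intros x y. rewrite A3, B3. reflexivity.
  - intros x y z. apply Rmax_lub.
    + eapply Rle_trans; [apply A4 with (y := fst y)|]. apply Rplus_le_compat; apply Rmax_l.
    + eapply Rle_trans; [apply B4 with (y := snd y)|]. apply Rplus_le_compat; apply Rmax_r.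
Qed.

Lemma polish_prod {A B : Type} (dA : A -> A -> R) (dB : B -> B -> R) :
  polish dA -> polish dB -> polish (prod_metric dA dB).
Proof.
  intros (MA & CA & [eA HA]) (MB & CB & [eB HB]). split; [apply metric_prod; auto|split].
  - intros u Hu.
    destruct (CA (fun n => fst (u n))) as [la Hla].
    { intros eps Heps. destruct (Hu eps Heps) as [N HN]. exists N. intros n m Hn Hm.
      eapply Rle_lt_trans; [apply Rmax_l|apply (HN n m Hn Hm)]. }
    destruct (CB (fun n => snd (u n))) as [lb Hlb].
    { intros eps Heps. destruct (Hu eps Heps) as [N HN]. exists N. intros n m Hn Hm.
      eapply Rle_lt_trans; [apply Rmax_r|apply (HN n m Hn Hm)]. }
    exists (la, lb). intros eps Heps.
    destruct (Hla eps Heps) as [N1 H1]. destruct (Hlb eps Heps) as [N2 H2].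
    exists (max N1 N2). intros n Hn. apply Rmax_lub_lt; [apply H1|apply H2]; lia.
  - exists (fun k => let '(a, b) := Cantor.of_nat k in
               match eA a, eB b with Some x, Some y => Some (x, y) | _, _ => None end).
    intros [x y] eps Heps.
    destruct (HA x eps Heps) as (a & x' & Ea & Hx). destruct (HB y eps Heps) as (b & y' & Eb & Hy).
    exists (Cantor.to_nat (a, b)), (x', y'). rewrite Cantor.cancel_of_to, Ea, Eb.
    split; [reflexivity|]. apply Rmax_lub_lt; auto.
Qed.

Lemma borel_compact {A : Type} (dA : A -> A -> R) (K : A -> Prop) :
  is_metric dA -> Defs.compact dA K -> borel dA K.
Proof.
  intros (M1 & M2 & M3 & M4) HK. apply borel_closed. intros x Hx.
  set (far := fun (n : nat) (y : A) => / INR (S n) < dA x y).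
  destruct (HK nat far) as [l Hl].
  - intros n y Hy. exists (dA x y - / INR (S n)). split; [unfold far in Hy; lra|].
    intros y' Hy'. unfold far. pose proof (M4 x y' y). pose proof (M3 y' y). lra.
  - intros y Hy. apply inv_succ_lt.
    pose proof (M1 x y). destruct (Req_dec (dA x y) 0) as [E|E]; [|lra].
    apply M2 in E. subst. contradiction.
  - assert (HN : exists N, forall i, In i l -> (i <= N)%nat).
    { exists (list_max l). apply Forall_forall, list_max_le. lia. }
    destruct HN as [N HN]. exists (/ INR (S N)). split; [apply Rinv_0_lt_compat, lt_0_INR; lia|].
    intros y Hy Ky. destruct (Hl y Ky) as (i & Hi & Hfar). unfold far in Hfar.
    assert (/ INR (S N) <= / INR (S i)).
    { apply Rinv_le_contravar; [apply lt_0_INR; lia|apply le_INR; specialize (HN i Hi); lia]. }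
    lra.
Qed.

Fixpoint list_metric {T : Type} (dT : T -> T -> R) (l l' : list T) : R :=
  match l, l' with
  | [], [] => 0
  | a :: l, b :: l' => Rmax (Rmin 1 (dT a b)) (list_metric dT l l')
  | _, _ => 2
  end.

Section ListMetric.
Context {T : Type} (dT : T -> T -> R) (MT : is_metric dT).

Let dT_nonneg a b : 0 <= dT a b := proj1 MT a b.

Let dT_refl a : dT a a = 0.
Proof. apply MT. reflexivity. Qed.

Lemma list_metric_bounds l l' : 0 <= list_metric dT l l' <= 2.
Proof.
  revert l'; induction l as [|a l IH]; intros [|b l']; simpl; try lra.
  specialize (IH l'). pose proof (dT_nonneg a b).
  unfold Rmin, Rmax; repeat destruct Rle_dec; lra.
Qed.

Lemma list_metric_refl l : list_metric dT l l = 0.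
Proof.
  induction l as [|a l IH]; simpl; auto. rewrite IH, dT_refl.
  unfold Rmin, Rmax; repeat destruct Rle_dec; lra.
Qed.

Lemma list_metric_length l l' : list_metric dT l l' < 1 -> length l = length l'.
Proof.
  revert l'; induction l as [|a l IH]; intros [|b l']; simpl; intros H; try lra; auto.
  f_equal. apply IH. eapply Rle_lt_trans; [apply Rmax_r|exact H].
Qed.

Lemma list_metric_nth l l' i d0 :
  list_metric dT l l' < 1 -> Rmin 1 (dT (nth i l d0) (nth i l' d0)) <= list_metric dT l l'.
Proof.
  revert l' i; induction l as [|a l IH]; intros [|b l'] i; simpl; intros H; try lra.
  - destruct i; rewrite dT_refl; unfold Rmin; destruct Rle_dec; lra.
  - destruct i; [apply Rmax_l|].
    eapply Rle_trans; [apply IH|apply Rmax_r]. eapply Rle_lt_trans; [apply Rmax_r|exact H].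
Qed.

Lemma metric_list_metric : is_metric (list_metric dT).
Proof.
  pose proof MT as (_ & M2 & M3 & M4).
  split; [|split; [|split]].
  - intros; apply list_metric_bounds.
  - intros l l'. split; [|intros ->; apply list_metric_refl].
    revert l'; induction l as [|a l IH]; intros [|b l']; simpl; intros H; try lra; auto.
    pose proof (list_metric_bounds l l'). pose proof (dT_nonneg a b).
    assert (Rmin 1 (dT a b) <= 0) by (rewrite <- H; apply Rmax_l).
    assert (list_metric dT l l' <= 0) by (rewrite <- H; apply Rmax_r).
    f_equal; [apply M2; unfold Rmin in *; destruct Rle_dec; lra|apply IH; lra].
  - induction x as [|a l IH]; intros [|b l']; simpl; auto. rewrite IH, M3. reflexivity.
  - intros x y z. revert y z.
    induction x as [|a l IH]; intros [|b l'] [|c l''];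
      match goal with |- list_metric dT ?x ?z <= list_metric dT ?x ?y + list_metric dT ?y ?z =>
        pose proof (list_metric_bounds x y); pose proof (list_metric_bounds y z);
        pose proof (list_metric_bounds x z) end;
      simpl in *; try lra.
    specialize (IH l' l''). pose proof (M4 a b c).
    pose proof (dT_nonneg a b). pose proof (dT_nonneg b c). pose proof (dT_nonneg a c).
    unfold Rmin, Rmax in *; repeat destruct Rle_dec; lra.
Qed.

Lemma continuous_nth (i : nat) (d0 : T) :
  continuous_map (list_metric dT) dT (fun l => nth i l d0).
Proof.
  intros l eps Heps. exists (Rmin eps 1). split; [apply Rmin_glb_lt; lra|]. intros l' Hl.
  assert (H1 : list_metric dT l l' < 1) by (eapply Rlt_le_trans; [exact Hl|apply Rmin_r]).
  pose proof (list_metric_nth l l' i d0 H1).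
  assert (H3 : Rmin 1 (dT (nth i l d0) (nth i l' d0)) < Rmin eps 1) by lra.
  unfold Rmin in H3; repeat destruct Rle_dec; lra.
Qed.

End ListMetric.

Section ListPolish.
Context {T : Type} (dT : T -> T -> R) (PT : polish dT).

Lemma list_metric_complete_length k (v : nat -> list T) :
  (forall n, length (v n) = k) -> cauchy (list_metric dT) v ->
  exists l, converges_to (list_metric dT) v l.
Proof.
  destruct PT as (MT & CT & _). revert v.
  induction k as [|k IH]; intros v Hlen Hcauchy.
  - exists []. intros eps Heps. exists 0%nat. intros n _.
    specialize (Hlen n). destruct (v n); [simpl; lra|discriminate].
  - destruct (v 0%nat) as [|a0 l0] eqn:E0; [specialize (Hlen 0%nat); rewrite E0 in Hlen; discriminate|].
    set (h := fun n => hd a0 (v n)). set (t := fun n => tl (v n)).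
    assert (Hv : forall n, v n = h n :: t n).
    { intros n. unfold h, t. specialize (Hlen n). destruct (v n); [discriminate|reflexivity]. }
    destruct (CT h) as [lh Hlh].
    { intros eps Heps. destruct (Hcauchy (Rmin eps 1) ltac:(apply Rmin_glb_lt; lra)) as [N HN].
      exists N. intros n m Hn Hm. specialize (HN n m Hn Hm). rewrite !Hv in HN. simpl in HN.
      assert (Hr : Rmin 1 (dT (h n) (h m)) < Rmin eps 1)
        by (eapply Rle_lt_trans; [apply Rmax_l|exact HN]).
      unfold Rmin in Hr; repeat destruct Rle_dec; lra. }
    destruct (IH t) as [lt Hlt].
    { intros n. specialize (Hlen n). rewrite Hv in Hlen. simpl in Hlen. lia. }
    { intros eps Heps. destruct (Hcauchy eps Heps) as [N HN]. exists N. intros n m Hn Hm.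
      specialize (HN n m Hn Hm). rewrite !Hv in HN. simpl in HN.
      eapply Rle_lt_trans; [apply Rmax_r|exact HN]. }
    exists (lh :: lt). intros eps Heps.
    destruct (Hlh eps Heps) as [N1 H1]. destruct (Hlt eps Heps) as [N2 H2].
    exists (max N1 N2). intros n Hn. rewrite Hv. simpl. apply Rmax_lub_lt.
    + eapply Rle_lt_trans; [apply Rmin_r|apply H1; lia].
    + apply H2; lia.
Qed.

Lemma list_metric_complete : complete (list_metric dT).
Proof.
  intros u Hu. destruct (Hu 1 ltac:(lra)) as [N HN].
  destruct (list_metric_complete_length (length (u N)) (fun n => u (n + N)%nat)) as [l Hl].
  - intros n. symmetry. apply (list_metric_length dT). apply HN; lia.
  - intros eps Heps. destruct (Hu eps Heps) as [M HM]. exists M. intros n m Hn Hm. apply HM; lia.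
  - exists l. intros eps Heps. destruct (Hl eps Heps) as [M HM]. exists (M + N)%nat.
    intros n Hn. replace n with ((n - N) + N)%nat by lia. apply (HM (n - N)%nat). lia.
Qed.

Fixpoint decode_list (e : nat -> option T) (k m : nat) : option (list T) :=
  match k with
  | O => Some []
  | S k' => let '(a, b) := Cantor.of_nat m in
            match e a, decode_list e k' b with Some x, Some l => Some (x :: l) | _, _ => None end
  end.

Lemma list_metric_separable : separable (list_metric dT).
Proof.
  destruct PT as (MT & _ & [e He]).
  exists (fun n => let '(k, m) := Cantor.of_nat n in decode_list e k m).
  assert (Happrox : forall l eps, 0 < eps ->
            exists m l', decode_list e (length l) m = Some l' /\ list_metric dT l l' < eps).
  { induction l as [|x l IH]; intros eps Heps.
    - exists 0%nat, []. simpl. split; [reflexivity|lra].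
    - destruct (He x eps Heps) as (a & y & Ea & Hy). destruct (IH eps Heps) as (b & l' & Eb & Hl').
      exists (Cantor.to_nat (a, b)), (y :: l'). cbn [length decode_list].
      rewrite Cantor.cancel_of_to, Ea, Eb. split; [reflexivity|].
      simpl. apply Rmax_lub_lt; auto. eapply Rle_lt_trans; [apply Rmin_r|exact Hy]. }
  intros l eps Heps. destruct (Happrox l eps Heps) as (m & l' & E & Hd).
  exists (Cantor.to_nat (length l, m)), l'. rewrite Cantor.cancel_of_to. auto.
Qed.

Lemma polish_list_metric : polish (list_metric dT).
Proof.
  split; [apply metric_list_metric, PT|].
  split; [apply list_metric_complete|apply list_metric_separable].
Qed.

End ListPolish.

Section BorelGraph.
Context {A : Type} (dA : A -> A -> R) (f : A -> ER) (Hf : borel_fun dA f).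

Lemma borel_sublevel_graph : borel (prod_metric dA Rdist) (fun q => ele (f (fst q)) (Fin (snd q))).
Proof.
  apply (borel_ext _ (fun q => forall n a1 a2,
            qval n a1 a2 <= snd q \/ ele (f (fst q)) (Fin (qval n a1 a2)))).
  - intros [a r]; simpl. split.
    + intros H. destruct (f a) as [s|]; simpl in *.
      * destruct (Rle_dec s r) as [|Hsr]; auto. apply Rnot_le_lt in Hsr.
        destruct (qval_dense r s Hsr) as (n & a1 & a2 & Hq). destruct (H n a1 a2); lra.
      * destruct (qval_dense r (r + 1) ltac:(lra)) as (n & a1 & a2 & Hq).
        destruct (H n a1 a2); lra.
    + intros H n a1 a2. destruct (f a) as [s|]; simpl in *; [|contradiction].
      destruct (Rle_dec (qval n a1 a2) r); [left|right]; lra.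
  - do 3 (apply borel_countable_inter; intros ?). apply borel_union.
    + apply borel_le_continuous; [apply continuous_const, Rdist_eq|apply continuous_snd].
    + apply (borel_preimage _ dA fst (fun a => ele (f a) (Fin _))); [apply continuous_fst|apply Hf].
Qed.

Lemma borel_graph : borel (prod_metric dA Rdist) (fun q => f (fst q) = Fin (snd q)).
Proof.
  apply (borel_ext _ (fun q => ele (f (fst q)) (Fin (snd q)) /\
                               forall n, ~ ele (f (fst q)) (Fin (snd q + - / INR (S n))))).
  - intros [a r]; cbn [fst snd]. split.
    + intros [Hle Hnlt]. destruct (f a) as [s|]; cbn [ele] in *; [|contradiction].
      destruct (Rle_lt_or_eq_dec s r Hle) as [Hlt| ->]; [exfalso|reflexivity].
      destruct (inv_succ_lt (r - s) ltac:(lra)) as [n Hn]. apply (Hnlt n); cbn [ele]; lra.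
    + intros ->. cbn [ele]. split; [lra|]. intros n.
      assert (0 < / INR (S n)) by (apply Rinv_0_lt_compat, lt_0_INR; lia). lra.
  - apply borel_inter; [apply borel_sublevel_graph|].
    apply borel_countable_inter; intros n. apply borel_compl.
    apply (borel_preimage _ (prod_metric dA Rdist) (fun q => (fst q, snd q + - / INR (S n)))
             (fun q => ele (f (fst q)) (Fin (snd q)))); [|apply borel_sublevel_graph].
    apply continuous_pair; [apply continuous_fst|].
    apply continuous_plus; [apply continuous_snd|apply continuous_const, Rdist_eq].
Qed.

End BorelGraph.

(** * Cyclic monotonicity *)

(* [PInf] is sent to the junk value [0]: every use is guarded by finiteness. *)
Definition ER_val (a : ER) : R := match a with Fin r => r | PInf => 0 end.

Lemma Fin_ER_val a : a <> PInf -> a = Fin (ER_val a).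
Proof. destruct a; simpl; congruence. Qed.

Lemma ele_PInf a : ele a PInf.
Proof. destruct a; simpl; auto. Qed.

Lemma eadd3_finite a b c : eadd (eadd a b) c <> PInf ->
  a <> PInf /\ b <> PInf /\ c <> PInf /\
  ER_val (eadd (eadd a b) c) = ER_val a + ER_val b + ER_val c.
Proof. destruct a, b, c; simpl; intros H; try congruence. repeat split; discriminate. Qed.

Lemma esum_Fin n g f :
  (forall i, (i <= n)%nat -> g i = Fin (f i)) -> esum n g = Fin (sum_f_R0 f n).
Proof.
  induction n; intros H; simpl; [apply H; lia|].
  rewrite IHn by (intros; apply H; lia). rewrite H by lia. reflexivity.
Qed.

Lemma esum_finite_terms n g : esum n g <> PInf -> forall i, (i <= n)%nat -> g i <> PInf.
Proof.
  induction n; simpl; intros H i Hi.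
  - replace i with 0%nat by lia. exact H.
  - destruct (esum n g) eqn:E; destruct (g (S n)) eqn:E2; try (exfalso; apply H; reflexivity).
    destruct (Nat.eq_dec i (S n)) as [->|]; [congruence|]. apply IHn; [congruence|lia].
Qed.

Lemma cnext_le n i : (i <= n)%nat -> (cnext n i <= n)%nat.
Proof. intros. unfold cnext. destruct (Nat.eqb_spec i n); lia. Qed.

Lemma nth_map_seq {T : Type} (f : nat -> T) n j d : (j <= n)%nat -> nth j (map f (seq 0 (S n))) d = f j.
Proof.
  intros Hj. rewrite (nth_indep _ d (f 0%nat)) by (rewrite length_map, length_seq; lia).
  rewrite map_nth, seq_nth by lia. reflexivity.
Qed.

Section Pairs.
Context {X : Type}.

Definition pairs (n : nat) (x y : nat -> X) : list (X * X) :=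
  map (fun i => (x i, y i)) (seq 0 (S n)).

Lemma In_pairs n x y p : In p (pairs n x y) <-> exists i, (i <= n)%nat /\ p = (x i, y i).
Proof.
  unfold pairs. rewrite in_map_iff. split.
  - intros (i & <- & Hi). apply in_seq in Hi. exists i. split; [lia|reflexivity].
  - intros (i & Hi & ->). exists i. split; [reflexivity|]. apply in_seq. lia.
Qed.

Lemma Forall_pairs (Q : X * X -> Prop) n x y :
  Forall Q (pairs n x y) <-> forall i, (i <= n)%nat -> Q (x i, y i).
Proof.
  rewrite Forall_forall. split.
  - intros H i Hi. apply H, In_pairs. eauto.
  - intros H p Hp. apply In_pairs in Hp as (i & Hi & ->). auto.
Qed.

Lemma pairs_S n x y : pairs (S n) x y = pairs n x y ++ [(x (S n), y (S n))].
Proof. unfold pairs. rewrite seq_S, map_app. reflexivity. Qed.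

Lemma pairs_of_list q L :
  q :: L = pairs (length L) (fun i => fst (nth i (q :: L) q)) (fun i => snd (nth i (q :: L) q)).
Proof.
  apply (nth_ext _ _ q q); [unfold pairs; rewrite length_map, length_seq; reflexivity|].
  intros i Hi. unfold pairs. rewrite nth_map_seq by (simpl in Hi; lia).
  apply surjective_pairing.
Qed.

Definition head_source (L : list (X * X)) (s : X) : X :=
  match L with [] => s | q :: _ => fst q end.

(* [shift L s] pairs each target of [L] with the source of the next pair,
   and the last target with [s]; [shift L (head_source L s)] closes the cycle. *)
Fixpoint shift (L : list (X * X)) (s : X) : list (X * X) :=
  match L with
  | [] => []
  | q :: L' => (head_source L' s, snd q) :: shift L' s
  end.

Lemma head_source_app C L s : head_source (C ++ L) s = head_source C (head_source L s).
Proof. destruct C; reflexivity. Qed.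

Lemma shift_app C L s : shift (C ++ L) s = shift C (head_source L s) ++ shift L s.
Proof. induction C as [|q C IH]; simpl; [reflexivity|]. rewrite IH, head_source_app. reflexivity. Qed.

Lemma shift_end C e : C <> [] ->
  exists S0, forall s, shift C s = S0 ++ [(s, snd (last C e))].
Proof.
  induction C as [|q C IH]; intros Hne; [congruence|]. destruct C as [|q' C].
  - exists []. reflexivity.
  - destruct (IH ltac:(discriminate)) as [S0 HS0]. exists ((fst q', snd q) :: S0).
    intros s. change (shift (q :: q' :: C) s) with ((fst q', snd q) :: shift (q' :: C) s).
    rewrite HS0. reflexivity.
Qed.

Lemma pairs_ext n x x' y y' :
  (forall i, (i <= n)%nat -> x i = x' i /\ y i = y' i) -> pairs n x y = pairs n x' y'.
Proof.
  intros H. apply map_ext_in. intros i Hi. apply in_seq in Hi.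
  destruct (H i ltac:(lia)) as [-> ->]. reflexivity.
Qed.

Lemma shift_pairs n x y s :
  shift (pairs n x y) s = pairs n (fun i => if Nat.eqb i n then s else x (S i)) y.
Proof.
  revert s. induction n as [|n IH]; intros s; [reflexivity|].
  rewrite !pairs_S, shift_app, IH, Nat.eqb_refl. f_equal.
  apply pairs_ext. intros i Hi. split; [|reflexivity].
  destruct (Nat.eqb_spec i (S n)); [lia|]. destruct (Nat.eqb_spec i n) as [->|]; reflexivity.
Qed.

Lemma shift_pairs_cycle n x y : shift (pairs n x y) (x 0%nat) = pairs n (fun i => x (cnext n i)) y.
Proof.
  rewrite shift_pairs. apply pairs_ext. intros i _. split; [|reflexivity].
  unfold cnext. destruct (Nat.eqb i n); reflexivity.
Qed.

End Pairs.

Lemma list_choice {A B : Type} (Rel : A -> B -> Prop) (P : list A) :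
  (forall a, In a P -> exists b, Rel a b) ->
  exists W : list (A * B), map fst W = P /\ forall r, In r W -> Rel (fst r) (snd r).
Proof.
  induction P as [|a P IH]; intros H; [exists []; simpl; tauto|].
  destruct (H a (or_introl eq_refl)) as [b Hb].
  destruct IH as [W [HW1 HW2]]; [intros; apply H; right; auto|].
  exists ((a, b) :: W). simpl. rewrite HW1. split; [reflexivity|]. intros r [<-|Hr]; auto.
Qed.

Section CyclicMonotonicity.
Context {X : Type} (dL : X -> X -> ER) (HdL : ext_distance dL).

Definition cost (x y : X) : R := ER_val (dL x y).

Definition finite_pair (p : X * X) : Prop := dL (fst p) (snd p) <> PInf.

Fixpoint list_cost (L : list (X * X)) : R :=
  match L with [] => 0 | q :: L' => cost (fst q) (snd q) + list_cost L' end.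

Definition list_cyc_mono (P : X * X -> Prop) : Prop :=
  forall q L, (forall p, In p (q :: L) -> P p) -> Forall finite_pair (shift (q :: L) (fst q)) ->
    list_cost (q :: L) <= list_cost (shift (q :: L) (fst q)).

Lemma cost_triangle x y z : finite_pair (x, y) -> finite_pair (y, z) ->
  finite_pair (x, z) /\ cost x z <= cost x y + cost y z.
Proof.
  unfold finite_pair, cost. cbn [fst snd]. intros Hxy Hyz.
  pose proof (proj2 (proj2 (proj2 HdL)) x y z) as Htri.
  destruct (dL x y), (dL y z); try congruence. destruct (dL x z); simpl in *; [|contradiction].
  split; [discriminate|lra].
Qed.

Lemma finite_pair_sym x y : finite_pair (x, y) -> finite_pair (y, x).
Proof. unfold finite_pair. cbn [fst snd]. rewrite (proj1 (proj2 (proj2 HdL))). auto. Qed.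

Lemma list_cost_app C L : list_cost (C ++ L) = list_cost C + list_cost L.
Proof. induction C as [|q C IH]; simpl; [|rewrite IH]; lra. Qed.

Lemma list_cost_pairs n x y : list_cost (pairs n x y) = sum_f_R0 (fun i => cost (x i) (y i)) n.
Proof.
  induction n as [|n IH]; [simpl; lra|].
  rewrite pairs_S, list_cost_app, IH. simpl. lra.
Qed.

Lemma esum_pairs n x y : Forall finite_pair (pairs n x y) ->
  esum n (fun i => dL (x i) (y i)) = Fin (list_cost (pairs n x y)).
Proof.
  rewrite Forall_pairs, list_cost_pairs. intros H.
  apply esum_Fin. intros i Hi. apply Fin_ER_val, (H i Hi).
Qed.

Lemma esum_pairs_finite n x y : esum n (fun i => dL (x i) (y i)) <> PInf ->
  Forall finite_pair (pairs n x y).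
Proof. intros H. apply Forall_pairs. apply (esum_finite_terms _ _ H). Qed.

Lemma list_cyc_mono_of_cyc_mono (P : X * X -> Prop) :
  (forall p, P p -> finite_pair p) -> cyc_mono dL P -> list_cyc_mono P.
Proof.
  intros Hfin Hcm q L HP Hshift.
  rewrite (pairs_of_list q L) in HP, Hshift |- *.
  set (x := fun i => fst (nth i (q :: L) q)) in *. set (y := fun i => snd (nth i (q :: L) q)) in *.
  change (fst q) with (x 0%nat) in Hshift |- *. rewrite shift_pairs_cycle in Hshift |- *.
  assert (Hdirect : Forall finite_pair (pairs (length L) x y))
    by (apply Forall_forall; intros p Hp; apply Hfin, HP, Hp).
  pose proof (Hcm (length L) x y) as Hle.
  rewrite (esum_pairs _ x y Hdirect), (esum_pairs _ (fun i => x (cnext _ i)) y Hshift) in Hle.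
  apply Hle. intros i Hi. apply HP, In_pairs. eauto.
Qed.

Lemma cyc_mono_of_list_cyc_mono (P : X * X -> Prop) :
  (forall p, P p -> finite_pair p) -> list_cyc_mono P -> cyc_mono dL P.
Proof.
  intros Hfin Hlcm n x y HP.
  destruct (classic (esum n (fun i => dL (x (cnext n i)) (y i)) = PInf)) as [->|Hshift];
    [apply ele_PInf|].
  apply esum_pairs_finite in Hshift.
  assert (Hdirect : Forall finite_pair (pairs n x y))
    by (apply Forall_pairs; intros i Hi; apply Hfin, HP, Hi).
  rewrite esum_pairs, esum_pairs by assumption. cbn [ele].
  rewrite <- shift_pairs_cycle in Hshift |- *.
  apply Hlcm; [|exact Hshift].
  intros p Hp. apply In_pairs in Hp as (i & Hi & ->). auto.
Qed.

Section TransportRays.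
Variable Gam : X * X -> Prop.
Hypothesis Hfin : forall p, Gam p -> finite_pair p.
Hypothesis Hcm : cyc_mono dL Gam.

Definition chain (p : X * X) (C : list (X * X)) : Prop :=
  C <> [] /\ head_source C (fst p) = fst p /\ snd (last C p) = snd p /\
  (forall q, In q C -> Gam q) /\
  Forall finite_pair (shift C (fst p)) /\ list_cost (shift C (fst p)) = list_cost C.

Lemma balanced_chain_costs I w z :
  (forall i, (i <= I)%nat -> Gam (w i, z i)) ->
  esum I (fun i => dL (w (cnext I i)) (z i)) = esum I (fun i => dL (w i) (z i)) ->
  Forall finite_pair (pairs I w z) /\ Forall finite_pair (pairs I (fun i => w (cnext I i)) z) /\
  list_cost (pairs I (fun i => w (cnext I i)) z) = list_cost (pairs I w z).
Proof.
  intros HG Heq.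
  assert (Hdirect : Forall finite_pair (pairs I w z))
    by (apply Forall_pairs; intros i Hi; apply Hfin, HG, Hi).
  pose proof (esum_pairs _ _ _ Hdirect) as Ecost.
  assert (Hshift : Forall finite_pair (pairs I (fun i => w (cnext I i)) z))
    by (apply esum_pairs_finite; rewrite Heq, Ecost; discriminate).
  rewrite Ecost, (esum_pairs _ _ _ Hshift) in Heq. split; [|split]; congruence.
Qed.

Lemma Gamma'_chain p : Gamma' dL Gam p -> exists C, chain p C.
Proof.
  intros (I & w & z & HG & Hw & Hz & Heq).
  destruct (balanced_chain_costs I w z HG Heq) as (_ & Hshift & Hcost).
  rewrite <- shift_pairs_cycle, Hw in Hshift, Hcost.
  exists (pairs I w z). repeat split.
  - unfold pairs. simpl. discriminate.
  - exact Hw.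
  - destruct I as [|I]; [exact Hz|]. rewrite pairs_S, last_last. exact Hz.
  - intros q Hq. apply In_pairs in Hq as (i & Hi & ->). auto.
  - exact Hshift.
  - exact Hcost.
Qed.

Lemma chain_concat (W : list ((X * X) * list (X * X))) s :
  (forall r, In r W -> chain (fst r) (snd r)) ->
  head_source (flat_map snd W) s = head_source (map fst W) s /\
  list_cost (shift (flat_map snd W) s) =
    list_cost (flat_map snd W) - list_cost (map fst W) + list_cost (shift (map fst W) s) /\
  (Forall finite_pair (shift (map fst W) s) -> Forall finite_pair (shift (flat_map snd W) s)).
Proof.
  induction W as [|[p C] W IH]; intros HW; [simpl; split; [|split]; auto; lra|].
  destruct IH as (IH1 & IH2 & IH3); [intros; apply HW; right; auto|].
  destruct (HW (p, C) (or_introl eq_refl)) as (Hne & Hhead & Hlast & _ & Hfinite & Hcost).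
  cbn [fst snd] in *. destruct (shift_end C p Hne) as [S0 HS0]. rewrite Hlast in HS0.
  rewrite HS0, list_cost_app in Hcost. rewrite HS0, Forall_app in Hfinite.
  cbn [flat_map map shift list_cost fst snd] in *.
  rewrite shift_app, HS0, head_source_app, IH1, !list_cost_app. simpl list_cost.
  split; [|split].
  - destruct C; [congruence|exact Hhead].
  - rewrite IH2. lra.
  - intros Hs. inversion Hs. rewrite !Forall_app. repeat split; auto. apply Hfinite.
Qed.

Lemma Gamma'_list_cyc_mono : list_cyc_mono (Gamma' dL Gam).
Proof.
  intros q L HP Hshift.
  destruct (list_choice chain (q :: L) (fun p Hp => Gamma'_chain p (HP p Hp))) as [W [HW1 HW2]].
  destruct W as [|[q' C] W]; [discriminate|]. injection HW1 as -> <-.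
  destruct (chain_concat ((q, C) :: W) (fst q) HW2) as (_ & Hcost & Hfinite).
  destruct (HW2 (q, C) (or_introl eq_refl)) as (Hne & Hhead & _ & HCGam & _).
  cbn [fst snd] in Hne, Hhead, HCGam.
  destruct C as [|c C]; [congruence|]. cbn [head_source] in Hhead.
  pose proof (list_cyc_mono_of_cyc_mono Gam Hfin Hcm c (C ++ flat_map snd W)) as Hmono.
  rewrite Hhead in Hmono. cbn [map flat_map fst snd app] in Hcost, Hfinite.
  enough (list_cost (c :: C ++ flat_map snd W) <= list_cost (shift (c :: C ++ flat_map snd W) (fst q)))
    by lra.
  apply Hmono; [|apply Hfinite, Hshift].
  intros p Hp. apply (in_app_or (c :: C)) in Hp as [Hp|Hp]; [apply HCGam, Hp|].
  apply in_flat_map in Hp as (r & Hr & Hp). apply (HW2 r (or_intror Hr)), Hp.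
Qed.

Lemma finite_pair_span C s e : C <> [] -> Forall finite_pair C -> Forall finite_pair (shift C s) ->
  finite_pair (head_source C s, snd (last C e)).
Proof.
  induction C as [|q C IH]; intros Hne HC Hshift; [congruence|].
  apply Forall_cons_iff in HC as [Hq HC].
  destruct C as [|q' C]; [exact Hq|].
  cbn [shift head_source] in Hshift. apply Forall_cons_iff in Hshift as [Hlink Hshift].
  specialize (IH ltac:(discriminate) HC Hshift). cbn [head_source] in IH |- *.
  change (last (q :: q' :: C) e) with (last (q' :: C) e).
  destruct q as [x y]. apply finite_pair_sym in Hlink.
  apply (cost_triangle _ y); [exact Hq|]. apply (cost_triangle _ (fst q')); [exact Hlink|exact IH].
Qed.

Lemma Gamma'_finite p : Gamma' dL Gam p -> finite_pair p.
Proof.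
  intros Hp. destruct (Gamma'_chain p Hp) as [C (Hne & Hhead & Hlast & HCGam & Hshift & _)].
  destruct p as [x y]. cbn [fst snd] in *. rewrite <- Hhead, <- Hlast.
  apply finite_pair_span; auto. apply Forall_forall. auto.
Qed.

Lemma Gamma'_sub_Grays p : Gamma' dL Gam p -> Grays dL Gam p.
Proof.
  destruct p as [w z]. intros Hp. exists w, z. split; [exact Hp|]. cbn [fst snd].
  rewrite !(proj2 (proj1 (proj2 HdL) _ _) eq_refl).
  destruct (dL w z); simpl; [f_equal; ring|reflexivity].
Qed.

Definition ray_witness (q w : X * X) : Prop :=
  Gamma' dL Gam w /\ finite_pair (fst w, fst q) /\ finite_pair q /\ finite_pair (snd q, snd w) /\
  cost (fst w) (snd w) = cost (fst w) (fst q) + cost (fst q) (snd q) + cost (snd q) (snd w).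

Lemma Grays_ray_witness q : Grays dL Gam q -> exists w, ray_witness q w.
Proof.
  intros (w & z & Hwz & Hray). exists (w, z).
  pose proof (Gamma'_finite _ Hwz) as Hfinite. unfold finite_pair in Hfinite. cbn [fst snd] in *.
  rewrite <- Hray in Hfinite. destruct (eadd3_finite _ _ _ Hfinite) as (H1 & H2 & H3 & Hsum).
  rewrite Hray in Hfinite, Hsum.
  unfold ray_witness, finite_pair, cost. cbn [fst snd]. repeat split; auto.
Qed.

Lemma Grays_finite q : Grays dL Gam q -> finite_pair q.
Proof. intros Hq. destruct (Grays_ray_witness q Hq) as [w Hw]. apply Hw. Qed.

Definition head_costs (W : list ((X * X) * (X * X))) : R :=
  list_cost (map (fun r => (fst (snd r), fst (fst r))) W).

Definition tail_costs (W : list ((X * X) * (X * X))) : R :=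
  list_cost (map (fun r => (snd (fst r), snd (snd r))) W).

Lemma list_cost_ray_witnesses W : (forall r, In r W -> ray_witness (fst r) (snd r)) ->
  list_cost (map snd W) = head_costs W + list_cost (map fst W) + tail_costs W.
Proof.
  unfold head_costs, tail_costs.
  induction W as [|r W IH]; intros HW; simpl; [lra|].
  rewrite IH by (intros; apply HW; right; auto).
  destruct (HW r (or_introl eq_refl)) as (_ & _ & _ & _ & ->). lra.
Qed.

(* Each shifted term [c(w_{k+1}, z_k)] is bounded through [x_{k+1}] and [y_k]:
   c(w_{k+1}, z_k) <= c(w_{k+1}, x_{k+1}) + c(x_{k+1}, y_k) + c(y_k, z_k);
   [ws], [xs] play the roles of [w] and [x] after the last pair. *)
Lemma shift_ray_witnesses r W ws xs :
  (forall r', In r' (r :: W) -> ray_witness (fst r') (snd r')) ->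
  Forall finite_pair (shift (map fst (r :: W)) xs) -> finite_pair (ws, xs) ->
  Forall finite_pair (shift (map snd (r :: W)) ws) /\
  list_cost (shift (map snd (r :: W)) ws) + cost (fst (snd r)) (fst (fst r)) <=
    head_costs (r :: W) + cost ws xs + list_cost (shift (map fst (r :: W)) xs) + tail_costs (r :: W).
Proof.
  unfold head_costs, tail_costs. revert r.
  induction W as [|r' W IH]; intros r HW Hshift Hend;
    destruct (HW r (or_introl eq_refl)) as (_ & _ & _ & Hyz & _);
    destruct r as [[x y] [w z]]; cbn [map shift head_source fst snd list_cost] in *;
    apply Forall_cons_iff in Hshift as [Hxy Hshift].
  - destruct (cost_triangle _ _ _ Hend Hxy) as [Hwy Hle1].
    destruct (cost_triangle _ _ _ Hwy Hyz) as [Hwz Hle2].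
    split; [constructor; auto|lra].
  - destruct (HW r' (or_intror (or_introl eq_refl))) as (_ & Hwx' & _ & _ & _).
    destruct (IH r' (fun r'' Hr'' => HW r'' (or_intror Hr'')) Hshift Hend) as [Hfin' Hle].
    destruct r' as [[x' y'] [w' z']]. cbn [map shift head_source fst snd list_cost] in *.
    destruct (cost_triangle _ _ _ Hwx' Hxy) as [Hwy Hle1].
    destruct (cost_triangle _ _ _ Hwy Hyz) as [Hwz Hle2].
    split; [constructor; auto|lra].
Qed.

Lemma Grays_list_cyc_mono : list_cyc_mono (Grays dL Gam).
Proof.
  intros q L HP Hshift.
  destruct (list_choice ray_witness (q :: L) (fun p Hp => Grays_ray_witness p (HP p Hp)))
    as [W [HW1 HW2]].
  destruct W as [|[q' w] W]; [discriminate|]. injection HW1 as -> <-.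
  destruct (HW2 (q, w) (or_introl eq_refl)) as (Hw & Hwq & _).
  destruct (shift_ray_witnesses (q, w) W (fst w) (fst q) HW2 Hshift Hwq) as [Hfin' Hle].
  assert (Hcycle : list_cost (w :: map snd W) <= list_cost (shift (w :: map snd W) (fst w))).
  { apply Gamma'_list_cyc_mono; [|exact Hfin'].
    intros p [<-|Hp]; [exact Hw|]. apply in_map_iff in Hp as (r & <- & Hr).
    apply (HW2 r (or_intror Hr)). }
  pose proof (list_cost_ray_witnesses _ HW2) as Hdecomp.
  unfold head_costs in Hle, Hdecomp. cbn [map fst snd list_cost] in *. lra.
Qed.

Lemma Grays_cyc_mono : cyc_mono dL (Grays dL Gam).
Proof. apply cyc_mono_of_list_cyc_mono; [apply Grays_finite|apply Grays_list_cyc_mono]. Qed.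

End TransportRays.
End CyclicMonotonicity.

(** * Analyticity *)

Lemma borel_sigma_compact {A : Type} (dA : A -> A -> R) (K : A -> Prop) :
  is_metric dA -> sigma_compact dA K -> borel dA K.
Proof.
  intros HA [Kn [HKn HK]].
  apply (borel_ext _ (fun a => exists n, Kn n a)); [intros a; rewrite HK; tauto|].
  apply borel_countable_union. intros n. apply borel_compact; auto.
Qed.

Lemma analytic_empty {Y : Type} (dY : Y -> Y -> R) (A : Y -> Prop) :
  (forall y, ~ A y) -> analytic dY A.
Proof.
  intros HA. exists R, Rdist. split; [apply polish_Rdist|].
  exists (fun _ => False). split; [apply borel_empty|].
  intros y. split; [intros Hy; destruct (HA y Hy)|intros [_ []]].
Qed.

Lemma analytic_union_preimage {Y : Type} (dY : Y -> Y -> R) (A : Y -> Prop) (s : Y -> Y) :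
  continuous_map dY dY s -> analytic dY A -> analytic dY (fun y => A y \/ A (s y)).
Proof.
  intros Hs (Z & dZ & HZ & B & HB & HA). exists Z, dZ. split; [exact HZ|].
  exists (fun t => B t \/ B (s (fst t), snd t)). split.
  - apply borel_union; [exact HB|].
    apply (borel_preimage _ (prod_metric dY dZ) (fun t => (s (fst t), snd t)) B); [|exact HB].
    apply continuous_pair; [apply (continuous_comp _ dY); [apply continuous_fst|exact Hs]|].
    apply continuous_snd.
  - intros y. rewrite !HA. firstorder.
Qed.

Section RayCode.
Context {X : Type} (d : X -> X -> R) (HX : polish d).
Context (dL : X -> X -> ER) (HdL : ext_distance dL).
Hypothesis HdLB : borel_fun (prod_metric d d) (fun p => dL (fst p) (snd p)).
Variable Gam : X * X -> Prop.
Hypothesis Hfin : forall p, Gam p -> finite_pair dL p.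
Hypothesis HGam : borel (prod_metric d d) Gam.

(* A code for [(x, y) \in G]: the chain [(w_i, z_i, c(w_{i+1}, z_i), c(w_i, z_i))]
   of a pair of [Gamma'], and the costs [c(w_0, x), c(x, y), c(y, z_I), c(w_0, z_I)]. *)
Definition code_entry : Type := (X * X) * (R * R).
Definition code : Type := list code_entry * ((R * R) * (R * R)).

Let dXX := prod_metric d d.
Let dRR := prod_metric Rdist Rdist.
Let dEntry := prod_metric dXX dRR.
Definition code_metric : code -> code -> R := prod_metric (list_metric dEntry) (prod_metric dRR dRR).
Let dT := prod_metric dXX code_metric.

Lemma polish_entry_metric : polish dEntry.
Proof. apply polish_prod; apply polish_prod; auto using polish_Rdist. Qed.

Lemma polish_code_metric : polish code_metric.
Proof.
  apply polish_prod; [apply polish_list_metric, polish_entry_metric|].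
  apply polish_prod; apply polish_prod; apply polish_Rdist.
Qed.

Variable e0 : code_entry.

Definition entry (i : nat) (t : (X * X) * code) : code_entry := nth i (fst (snd t)) e0.

Lemma continuous_entry i : continuous_map dT dEntry (entry i).
Proof.
  apply (continuous_comp _ (list_metric dEntry) _ (fun t => fst (snd t)) (fun l => nth i l e0)).
  - apply (continuous_comp _ code_metric); [apply continuous_snd|apply continuous_fst].
  - apply continuous_nth, (proj1 polish_entry_metric).
Qed.

Ltac continuous_coordinate :=
  first [ apply continuous_entry | apply continuous_fst | apply continuous_snd
        | eapply continuous_comp; [continuous_coordinate|continuous_coordinate] ].

Lemma borel_dL_graph u v r :
  continuous_map dT d u -> continuous_map dT d v -> continuous_map dT Rdist r ->
  borel dT (fun t => dL (u t) (v t) = Fin (r t)).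
Proof.
  intros Hu Hv Hr.
  apply (borel_preimage _ (prod_metric dXX Rdist) (fun t => ((u t, v t), r t))
           (fun q => dL (fst (fst q)) (snd (fst q)) = Fin (snd q)));
    [|apply (borel_graph _ (fun p => dL (fst p) (snd p)) HdLB)].
  apply continuous_pair; [apply continuous_pair|]; auto.
Qed.

Definition src i t := fst (fst (entry i t)).
Definition tgt i t := snd (fst (entry i t)).
Definition shifted_val i t := fst (snd (entry i t)).
Definition direct_val i t := snd (snd (entry i t)).
Definition ray_vals (t : (X * X) * code) := snd (snd t).

Definition ray_code (t : (X * X) * code) : Prop :=
  exists I, length (fst (snd t)) = S I /\
  (forall i, (i <= I)%nat -> Gam (src i t, tgt i t) /\
     dL (src (cnext I i) t) (tgt i t) = Fin (shifted_val i t) /\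
     dL (src i t) (tgt i t) = Fin (direct_val i t)) /\
  sum_f_R0 (fun i => shifted_val i t) I = sum_f_R0 (fun i => direct_val i t) I /\
  dL (src 0 t) (fst (fst t)) = Fin (fst (fst (ray_vals t))) /\
  dL (fst (fst t)) (snd (fst t)) = Fin (snd (fst (ray_vals t))) /\
  dL (snd (fst t)) (tgt I t) = Fin (fst (snd (ray_vals t))) /\
  dL (src 0 t) (tgt I t) = Fin (snd (snd (ray_vals t))) /\
  fst (fst (ray_vals t)) + snd (fst (ray_vals t)) + fst (snd (ray_vals t)) = snd (snd (ray_vals t)).

Lemma borel_ray_code : borel dT ray_code.
Proof.
  assert (Hlength : forall I, borel dT (fun t => length (fst (snd t)) = S I)).
  { intros I. apply borel_open. intros t Ht. exists 1. split; [lra|]. intros t' Ht'.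
    rewrite <- Ht. symmetry. apply (list_metric_length dEntry).
    eapply Rle_lt_trans; [|exact Ht']. eapply Rle_trans; [|apply Rmax_r]. apply Rmax_l. }
  apply borel_countable_union. intros I.
  repeat apply borel_inter; try apply Hlength;
    try (apply borel_dL_graph; unfold src, tgt, shifted_val, direct_val, ray_vals; continuous_coordinate).
  - apply borel_countable_inter. intros i. apply borel_imply. intros _.
    apply borel_inter; [|apply borel_inter];
      [|apply borel_dL_graph; unfold src, tgt, shifted_val, direct_val; continuous_coordinate..].
    apply (borel_preimage _ dXX (fun t => (src i t, tgt i t))); [|exact HGam].
    apply continuous_pair; unfold src, tgt; continuous_coordinate.
  - apply borel_eq_continuous; apply continuous_sum; intros i;
      unfold shifted_val, direct_val; continuous_coordinate.
  - apply borel_eq_continuous; [|unfold ray_vals; continuous_coordinate].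
    repeat apply continuous_plus; unfold ray_vals; continuous_coordinate.
Qed.

Lemma ray_code_sound t : ray_code t -> Grays dL Gam (fst t).
Proof.
  intros (I & _ & Hchain & Hsum & Hin & Hmid & Hout & Hray & Hvals).
  exists (src 0 t), (tgt I t). split.
  - exists I, (fun i => src i t), (fun i => tgt i t).
    split; [intros i Hi; apply Hchain, Hi|split; [reflexivity|split; [reflexivity|]]].
    rewrite (esum_Fin I _ (fun i => shifted_val i t)), (esum_Fin I _ (fun i => direct_val i t)), Hsum;
      [reflexivity|intros i Hi; apply Hchain, Hi..].
  - cbn [fst snd]. rewrite Hin, Hmid, Hout, Hray. cbn [eadd]. rewrite Hvals. reflexivity.
Qed.

Lemma ray_code_complete p : Grays dL Gam p -> exists c, ray_code (p, c).
Proof.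
  intros Hp. destruct p as [x y]. destruct Hp as (w & z & Hwz & Hray). cbn [fst snd] in Hray.
  pose proof Hwz as (I & ws & zs & HG & Hw & Hz & Heq). cbn [fst snd] in Hw, Hz.
  destruct (balanced_chain_costs dL Gam Hfin I ws zs HG Heq) as (Hdirect & Hshift & Hsum).
  rewrite !list_cost_pairs in Hsum. rewrite Forall_pairs in Hdirect, Hshift.
  pose proof (Gamma'_finite dL HdL Gam Hfin _ Hwz) as Hwz_fin. unfold finite_pair in Hwz_fin.
  cbn [fst snd] in Hwz_fin. pose proof Hwz_fin as Hray_fin. rewrite <- Hray in Hray_fin.
  destruct (eadd3_finite _ _ _ Hray_fin) as (Hwx & Hxy & Hyz & Hvals). rewrite Hray in Hvals.
  set (f := fun j => ((ws j, zs j), (cost dL (ws (cnext I j)) (zs j), cost dL (ws j) (zs j)))).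
  set (vals := ((cost dL w x, cost dL x y), (cost dL y z, cost dL w z))).
  exists (map f (seq 0 (S I)), vals).
  assert (Hentry : forall i, (i <= I)%nat -> entry i ((x, y), (map f (seq 0 (S I)), vals)) = f i)
    by (intros i Hi; apply nth_map_seq, Hi).
  exists I. split; [cbn [fst snd]; rewrite length_map, length_seq; reflexivity|].
  split; [|split].
  - intros i Hi. unfold src, tgt, shifted_val, direct_val.
    rewrite !Hentry by (try apply cnext_le; lia). cbn [f fst snd].
    split; [apply HG, Hi|split; apply Fin_ER_val; [apply Hshift|apply Hdirect]; exact Hi].
  - transitivity (sum_f_R0 (fun i => cost dL (ws (cnext I i)) (zs i)) I);
      [|rewrite Hsum]; apply sum_eq; intros i Hi;
      unfold shifted_val, direct_val; rewrite Hentry by exact Hi; reflexivity.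
  - unfold src, tgt, ray_vals. rewrite !Hentry by lia. cbn [f vals fst snd]. rewrite Hw, Hz.
    unfold cost. repeat split; try (apply Fin_ER_val; assumption). lra.
Qed.

End RayCode.

Section Analytic.
Context {X : Type} (d : X -> X -> R) (HX : polish d).
Context (dL : X -> X -> ER) (HdL : ext_distance dL).
Hypothesis HdLB : borel_fun (prod_metric d d) (fun p => dL (fst p) (snd p)).
Variable Gam : X * X -> Prop.
Hypothesis Hfin : forall p, Gam p -> finite_pair dL p.
Hypothesis HGam : borel (prod_metric d d) Gam.

Lemma analytic_Grays : analytic (prod_metric d d) (Grays dL Gam).
Proof.
  destruct (classic (inhabited X)) as [[x0]|Hempty];
    [|apply analytic_empty; intros [x _] _; exact (Hempty (inhabits x))].
  exists (@code X), (code_metric d). split; [apply (polish_code_metric d HX)|].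
  exists (ray_code dL Gam ((x0, x0), (0, 0))).
  split; [apply (borel_ray_code d HX dL HdLB Gam HGam)|].
  intros p. split; [apply ray_code_complete; auto|].
  intros [c Hc]. apply (ray_code_sound dL Gam _ (p, c) Hc).
Qed.

Lemma analytic_Rrays : analytic (prod_metric d d) (Rrays dL Gam).
Proof.
  apply (analytic_union_preimage _ _ (fun p => (snd p, fst p))); [|exact analytic_Grays].
  apply continuous_pair; [apply continuous_snd|apply continuous_fst].
Qed.

End Analytic.

Theorem lemma3p3 (X : Type) (d : X -> X -> R) (dL : X -> X -> ER)
  (HX : polish d) (HdL : ext_distance dL)
  (HdLB : borel_fun (prod_metric d d) (fun p => dL (fst p) (snd p)))
  (Gam : X * X -> Prop)
  (Hfin : forall p, Gam p -> dL (fst p) (snd p) <> PInf)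
  (Hsc : sigma_compact (prod_metric d d) Gam)
  (Hcm : cyc_mono dL Gam) :
  cyc_mono dL (Grays dL Gam) /\
  (forall p, Gamma' dL Gam p -> Grays dL Gam p) /\
  (forall p, Grays dL Gam p -> dL (fst p) (snd p) <> PInf) /\
  analytic (prod_metric d d) (Grays dL Gam) /\
  analytic (prod_metric d d) (Rrays dL Gam).
Proof.
  assert (HGam : borel (prod_metric d d) Gam).
  { apply borel_sigma_compact; [apply metric_prod; apply HX|exact Hsc]. }
  split; [exact (Grays_cyc_mono dL HdL Gam Hfin Hcm)|].
  split; [exact (Gamma'_sub_Grays dL HdL Gam)|].
  split; [exact (Grays_finite dL HdL Gam Hfin)|].
  split; [exact (analytic_Grays d HX dL HdL HdLB Gam Hfin HGam)|].
  exact (analytic_Rrays d HX dL HdL HdLB Gam Hfin HGam).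
Qed.
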